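(* Let $G=(V,D,B)$ be a mixed graph with $V=\{1,\dots,n\}$ and let $D_L,D_R\subset D$. Let $G^*_{\mathrm{flow}}$ be the directed graph on $V\cup V'$, $V'=\{1',\dots,n'\}$, with edges $i\to j$ if $(j,i)\in D_L$, $i\to i'$ for all $i\in V$, $i\to j'$ if $(i,j)\in B$, and $i'\to j'$ if $(i,j)\in D_R$. Let $\tilde G=(\tilde V,\tilde D,\emptyset)$ be the bidirected subdivision of $G$: $\tilde V$ is $V$ together with one new vertex $u_{ij}$ for each bidirected edge $i\leftrightarrow j\in G$, and $\tilde D$ is $D$ together with the edges $u_{ij}\to i$ and $u_{ij}\to j$ for each such bidirected edge; let $\tilde D_L$ (resp. $\tilde D_R$) be $D_L$ (resp. $D_R$) together with all these new edges $u_{ij}\to i$, $u_{ij}\to j$. Let $\tilde G^*_{\mathrm{flow}}$ be the directed graph on $\tilde V\cup\tilde V'$ with edges $a\to b$ if $(b,a)\in\tilde D_L$, $a\to a'$ for all $a\in\tilde V$, and $a'\to b'$ if $(a,b)\in\tilde D_R$. In both networks all vertices and edges have capacity $1$. Then for any $S=\{s_1,\dots,s_k\}$, $T=\{t_1,\dots,t_k\}\subset V$, the maximum flow from $S$ to $T'=\{t_1',\dots,t_k'\}$ in $G^*_{\mathrm{flow}}$ equals the maximum flow from $S$ to $T'$ in $\tilde G^*_{\mathrm{flow}}$.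
   Context: A mixed graph $G=(V,D,B)$ has directed edges $D\subset V\times V$ and symmetric bidirected edges $B\subset V\times V$ (a bidirected edge $i\leftrightarrow j$ corresponds to the pair $(i,j),(j,i)\in B$), no self-loops. Maximum flow allows multiple sources and sinks and vertex capacities. *)

From HB Require Import structures.
From mathcomp Require Import all_boot all_order all_algebra.
From mathcomp Require Import reals.
Set Implicit Arguments. Unset Strict Implicit. Unset Printing Implicit Defensive.
Import Order.TTheory GRing.Theory Num.Theory.
Local Open Scope ring_scope.

(* Multiple sources/sinks are handled as with a super source feeding each
   s in S (supply sig s >= 0) and a super sink drained from each t in T
   (demand tau t >= 0).  Every edge has capacity 1, every vertex has capacity 1
   (total flow entering the vertex, including super-source supply, is <= 1). *)
Definition is_flow (R : realType) (W : finType) (e : rel W) (S T : {set W})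
    (f : W -> W -> R) (sig tau : W -> R) : Prop :=
  [/\ (forall x y, 0 <= f x y <= 1) /\ (forall x y, ~~ e x y -> f x y = 0),
      (forall x, 0 <= sig x) /\ (forall x, x \notin S -> sig x = 0),
      (forall x, 0 <= tau x) /\ (forall x, x \notin T -> tau x = 0),
      (forall x, \sum_(y : W) f y x + sig x = \sum_(y : W) f x y + tau x)
    & (forall x, \sum_(y : W) f y x + sig x <= 1)].

Definition flow_value (R : realType) (W : finType) (tau : W -> R) : R :=
  \sum_(x : W) tau x.

Definition is_max_flow (R : realType) (W : finType) (e : rel W) (S T : {set W})
    (m : R) : Prop :=
  (exists f sig tau, is_flow e S T f sig tau /\ flow_value tau = m) /\
  (forall f sig tau, is_flow e S T f sig tau -> flow_value tau <= m).

Definition mixed_graph (n : nat) (D B : rel 'I_n) : Prop :=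
  irreflexive D /\ irreflexive B /\ symmetric B.

(* G*_flow on V + V' : inl i = i, inr i = i'. *)
Definition Gflow (n : nat) (B DL DR : rel 'I_n) : rel ('I_n + 'I_n) :=
  fun a b =>
    match a, b with
    | inl i, inl j => DL j i
    | inl i, inr j => (i == j) || B i j
    | inr i, inr j => DR i j
    | inr _, inl _ => false
    end.

(* Bidirected subdivision: one new vertex u_ij per (unordered) bidirected
   edge i <-> j, represented by the pair (i, j) with i < j. *)
Definition bedge (n : nat) (B : rel 'I_n) :=
  {p : 'I_n * 'I_n | B p.1 p.2 && (p.1 < p.2)%N}.

Definition tV (n : nat) (B : rel 'I_n) := ('I_n + bedge B)%type.

Definition endpoint (n : nat) (B : rel 'I_n) (u : bedge B) (k : 'I_n) : bool :=
  ((sval u).1 == k) || ((sval u).2 == k).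

Definition tilde_rel (n : nat) (B : rel 'I_n) (X : rel 'I_n) : rel (tV B) :=
  fun a b =>
    match a, b with
    | inl i, inl j => X i j
    | inr u, inl k => endpoint u k
    | _, _ => false
    end.

Definition tildeD (n : nat) (D B : rel 'I_n) : rel (tV B) := @tilde_rel n B D.

Definition tGflow (n : nat) (B DL DR : rel 'I_n) : rel (tV B + tV B) :=
  fun a b =>
    match a, b with
    | inl x, inl y => @tilde_rel n B DL y x
    | inl x, inr y => x == y
    | inr x, inr y => @tilde_rel n B DR x y
    | inr _, inl _ => false
    end.

Arguments Gflow {n} B DL DR.
Arguments tGflow {n} B DL DR.
Arguments tilde_rel {n} B X.
Arguments tildeD {n} D B.
Arguments tV {n} B.
Arguments bedge {n} B.
Arguments mixed_graph {n} D B.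

From HB Require Import structures.
From mathcomp Require Import all_boot all_order all_algebra.
From mathcomp Require Import boolp classical_sets functions reals.
From mathcomp Require Import topology normedtype derive function_spaces.
Set Implicit Arguments. Unset Strict Implicit. Unset Printing Implicit Defensive.

Import Order.TTheory GRing.Theory Num.Theory.
Import numFieldNormedType.Exports.
Local Open Scope ring_scope.

(* Both networks are finite, so a maximum flow exists by compactness, and it
   suffices to turn every flow of either network into a flow of the other with
   the same value.  A flow f of G*_flow is routed through the subdivision as
   i -> u_ij -> u_ij' -> j'.  Since u_ij has capacity 1 and carries the flow of
   both i -> j' and j -> i', their common part min (f(i,j'), f(j,i')) is first
   moved onto i -> i' and j -> j'; this changes no in- or out-flow and leaves
   u_ij with |f(i,j') - f(j,i')| <= 1.  Conversely, a flow on the subdivided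
   network is contracted by distributing the flow through each u_ij over the
   pairs (i -> u_ij, u_ij' -> j') proportionally to the product of the two
   edge flows. *)

Lemma sum_if_eq (V : nmodType) (I : finType) (i : I) (F : I -> V) :
  \sum_j (if i == j then F j else 0) = F i.
Proof. by rewrite -big_mkcond (big_pred1 i) // => j; rewrite eq_sym. Qed.

Lemma sum_if (V : nmodType) (I : finType) (P : pred I) (b : bool) (F : I -> V) :
  \sum_(j | P j) (if b then F j else 0) = if b then \sum_(j | P j) F j else 0.
Proof. by case: b; rewrite // big1. Qed.

Lemma sum_eq_term (V : nmodType) (I : finType) (F : I -> V) i :
  (forall j, j != i -> F j = 0) -> \sum_j F j = F i.
Proof. by move=> F0; rewrite (bigD1 i) //= big1 ?addr0. Qed.

Lemma ler_sum_term (R : numDomainType) (I : finType) (F : I -> R) i :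
  (forall j, 0 <= F j) -> F i <= \sum_j F j.
Proof. by move=> F0; rewrite (bigD1 i) //= lerDl sumr_ge0. Qed.

Section Coupling.
Variables (R : numFieldType) (I J : finType) (a : I -> R) (b : J -> R) (s : R).
Hypotheses (a_ge0 : forall i, 0 <= a i) (b_ge0 : forall j, 0 <= b j).
Hypotheses (sum_a : \sum_i a i = s) (sum_b : \sum_j b j = s).

Lemma sum_coupling_row i : \sum_j a i * b j / s = a i.
Proof.
rewrite -mulr_suml -mulr_sumr sum_b.
have [s0|s_neq0] := eqVneq s 0; last by rewrite mulfK.
(* if s = 0 then every a i is 0, so the junk value of a division by 0 is harmless *)
by rewrite (psumr_eq0P (fun i _ => a_ge0 i) (etrans sum_a s0)) ?mul0r.
Qed.

Lemma sum_coupling_col j : \sum_i a i * b j / s = b j.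
Proof.
rewrite -mulr_suml -mulr_suml sum_a (mulrC s).
have [s0|s_neq0] := eqVneq s 0; last by rewrite mulfK.
by rewrite (psumr_eq0P (fun j _ => b_ge0 j) (etrans sum_b s0)) ?mul0r.
Qed.

End Coupling.

Section Uncross.
Variables (R : realDomainType) (I : finType) (P : I -> I -> R).
Hypothesis P_ge0 : forall i j, 0 <= P i j.

Definition crossing i j := Num.min (P i j) (P j i).

Definition uncross i j :=
  P i j - crossing i j + (if i == j then \sum_k crossing i k else 0).

Lemma crossingC i j : crossing i j = crossing j i.
Proof. exact: minC. Qed.

Lemma uncross_offdiag i j : i != j -> uncross i j = P i j - crossing i j.
Proof. by rewrite /uncross => /negbTE->; rewrite addr0. Qed.

Lemma uncross_ge0 i j : 0 <= uncross i j.
Proof.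
have [<-|ij] := eqVneq i j; last by rewrite uncross_offdiag // subr_ge0 ge_min lexx.
by rewrite /uncross /crossing minxx subrr add0r eqxx sumr_ge0 // => k _; rewrite le_min !P_ge0.
Qed.

Lemma sum_uncross_row i : \sum_j uncross i j = \sum_j P i j.
Proof. by rewrite big_split sum_if_eq sumrB /= subrK. Qed.

Lemma sum_uncross_col j : \sum_i uncross i j = \sum_i P i j.
Proof.
rewrite big_split /= -big_mkcond (big_pred1 j) //= sumrB.
by rewrite (eq_bigr _ (fun k _ => crossingC j k)) subrK.
Qed.

Lemma uncross_eq0 i j : i != j -> P i j = 0 -> uncross i j = 0.
Proof.
by move=> ij Pij; rewrite uncross_offdiag // /crossing Pij (min_l (P_ge0 j i)) subrr.
Qed.

Lemma uncross_pair_le i j : i != j ->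
  uncross i j + uncross j i <= Num.max (P i j) (P j i).
Proof.
move=> ij; have ji : j != i by rewrite eq_sym.
rewrite !uncross_offdiag // (crossingC j i) /crossing.
have [le|/ltW le] := leP (P i j) (P j i).
- by rewrite subrr add0r lerBlDr lerDl.
- by rewrite subrr addr0 lerBlDr lerDl.
Qed.

End Uncross.

Section FlowFacts.
Variables (R : realType) (W : finType) (e : rel W) (S T : {set W}).
Variables (f : W -> W -> R) (sig tau : W -> R).
Hypothesis hf : is_flow e S T f sig tau.

Lemma flow_ge0 x y : 0 <= f x y.
Proof. by case: hf => [[/(_ x y)/andP[]]]. Qed.

Lemma flow_le1 x y : f x y <= 1.
Proof. by case: hf => [[/(_ x y)/andP[]]]. Qed.

Lemma flow_off_edge x y : ~~ e x y -> f x y = 0.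
Proof. by move=> exy; case: hf => [[_ ->]]. Qed.

Lemma source_ge0 x : 0 <= sig x.
Proof. by case: hf => _ []. Qed.

Lemma source_notin x : x \notin S -> sig x = 0.
Proof. by move=> xS; case: hf => _ [_ ->]. Qed.

Lemma sink_ge0 x : 0 <= tau x.
Proof. by case: hf => _ _ []. Qed.

Lemma sink_notin x : x \notin T -> tau x = 0.
Proof. by move=> xT; case: hf => _ _ [_ ->]. Qed.

Lemma flow_conservation x : \sum_y f y x + sig x = \sum_y f x y + tau x.
Proof. by case: hf. Qed.

Lemma flow_vertex_capacity x : \sum_y f y x + sig x <= 1.
Proof. by case: hf. Qed.

Lemma sink_le1 x : tau x <= 1.
Proof.
apply: le_trans (flow_vertex_capacity x); rewrite flow_conservation lerDr.
by apply: sumr_ge0 => y _; apply: flow_ge0.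
Qed.

Lemma source_le1 x : sig x <= 1.
Proof.
apply: le_trans (flow_vertex_capacity x); rewrite lerDr.
by apply: sumr_ge0 => y _; apply: flow_ge0.
Qed.

End FlowFacts.
Arguments flow_off_edge [R W e S T f sig tau] hf x y.

Lemma is_flow_intro (R : realType) (W : finType) (e : rel W) (S T : {set W})
    (f : W -> W -> R) (sig tau : W -> R) :
  (forall x y, 0 <= f x y) -> (forall x y, ~~ e x y -> f x y = 0) ->
  (forall x, 0 <= sig x) -> (forall x, x \notin S -> sig x = 0) ->
  (forall x, 0 <= tau x) -> (forall x, x \notin T -> tau x = 0) ->
  (forall x, \sum_y f y x + sig x = \sum_y f x y + tau x) ->
  (forall x, \sum_y f y x + sig x <= 1) ->
  is_flow e S T f sig tau.
Proof.
move=> f_ge0 f_off sig_ge0 sig_off tau_ge0 tau_off fcons fcap.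
split=> //; split=> // x y; rewrite f_ge0 (le_trans _ (fcap x)) // fcons.
by rewrite (le_trans (ler_sum_term y (f_ge0 x))) // lerDl.
Qed.

Definition is_flow_value (R : realType) (W : finType) (e : rel W) (S T : {set W})
    (v : R) : Prop :=
  exists f sig tau, is_flow e S T f sig tau /\ flow_value tau = v.

Lemma is_max_flow_transfer (R : realType) (W1 W2 : finType) (e1 : rel W1)
    (e2 : rel W2) (S1 T1 : {set W1}) (S2 T2 : {set W2}) (m : R) :
  (forall v : R, is_flow_value e1 S1 T1 v -> is_flow_value e2 S2 T2 v) ->
  (forall v : R, is_flow_value e2 S2 T2 v -> is_flow_value e1 S1 T1 v) ->
  is_max_flow e1 S1 T1 m -> is_max_flow e2 S2 T2 m.
Proof.
move=> to2 to1 [/to2 flow_m max_m]; split=> // f sig tau hf.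
have [f' [sig' [tau' [hf' <-]]]] : is_flow_value e1 S1 T1 (flow_value tau).
  by apply: to1; exists f, sig, tau.
exact: max_m hf'.
Qed.

Section ClosedSets.
Local Open Scope classical_set_scope.
Variables (R : realType) (T : topologicalType).

Lemma continuous_add (g h : T -> R) :
  continuous g -> continuous h -> continuous (fun x => g x + h x).
Proof. by move=> cg ch x; exact: continuousD (cg x) (ch x). Qed.

Lemma continuous_sum (I : finType) (F : I -> T -> R) :
  (forall i, continuous (F i)) -> continuous (fun x => \sum_i F i x).
Proof.
move=> cF; have -> : (fun x => \sum_i F i x) = \sum_i F i.
  by apply: funext => x; rewrite fct_sumE.
apply: (big_ind (fun h : T -> R => continuous h)) => [|h1 h2 c1 c2 x|i _].
- exact: cst_continuous.
- exact: continuous_add.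
- exact: cF.
Qed.

Lemma closed_le_cont (g h : T -> R) :
  continuous g -> continuous h -> closed [set x | g x <= h x].
Proof.
move=> cg ch; rewrite (_ : [set x | _] = (h - g) @^-1` [set r | 0 <= r]).
  by apply: preimage_closed => [x _|]; [exact: continuousB (ch x) (cg x)|exact: closed_ge].
by apply/seteqP; split => x /=; rewrite subr_ge0.
Qed.

Lemma closed_eq_cont (g h : T -> R) :
  continuous g -> continuous h -> closed [set x | g x = h x].
Proof.
move=> cg ch; rewrite (_ : [set x | _] = (h - g) @^-1` [set 0]).
  by apply: preimage_closed => [x _|]; [exact: continuousB (ch x) (cg x)|exact: closed_eq].
apply/seteqP; split => x; rewrite /= !fctE; first by move->; rewrite subrr.
by move/subr0_eq.
Qed.

Lemma closed_forall (I : Type) (P : I -> T -> Prop) :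
  (forall i, closed [set x | P i x]) -> closed [set x | forall i, P i x].
Proof.
move=> cP; rewrite (_ : [set x | _] = \bigcap_i [set x | P i x]).
  by apply: closed_bigI => i _; exact: cP.
by apply/seteqP; split => [x Px i _|x Px i]; apply: Px.
Qed.

Lemma closed_implies (b : bool) (P : T -> Prop) :
  closed [set x | P x] -> closed [set x | b -> P x].
Proof.
case: b => cP.
  rewrite (_ : [set x | _] = [set x | P x]) //.
  by apply/seteqP; split => x /= Px; [exact: Px | move=> _].
rewrite (_ : [set x | _] = setT); first exact: closedT.
by apply/seteqP; split => x.
Qed.

Lemma closed_andb (P Q : T -> bool) :
  closed [set x | P x] -> closed [set x | Q x] -> closed [set x | P x && Q x].
Proof.
move=> cP cQ; rewrite (_ : [set x | _] = [set x | P x] `&` [set x | Q x]).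
  exact: closedI.
by apply/seteqP; split => x /= /andP.
Qed.

Lemma closed_and5 (P1 P2 P3 P4 P5 : T -> Prop) :
  closed [set x | P1 x] -> closed [set x | P2 x] -> closed [set x | P3 x] ->
  closed [set x | P4 x] -> closed [set x | P5 x] ->
  closed [set x | [/\ P1 x, P2 x, P3 x, P4 x & P5 x]].
Proof.
move=> c1 c2 c3 c4 c5; rewrite (_ : [set x | _] =
  [set x | P1 x] `&` [set x | P2 x] `&` [set x | P3 x] `&` [set x | P4 x] `&` [set x | P5 x]).
  by repeat apply: closedI.
by apply/seteqP; split => x /=; [case|move=> [[[[]]]]].
Qed.

End ClosedSets.

Section MaxFlowExists.
Local Open Scope classical_set_scope.
Variables (R : realType) (W : finType) (e : rel W) (S T : {set W}).

Local Notation K := ((W * W) + W + W)%type.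
Local Notation V := (prod_topology (fun _ : K => R)).

Let flow_of (v : V) x y : R := v (inl (inl (x, y))).
Let source_of (v : V) x : R := v (inl (inr x)).
Let sink_of (v : V) x : R := v (inr x).
Let vector_of (f : W -> W -> R) (sig tau : W -> R) : V := fun k =>
  match k with inl (inl (x, y)) => f x y | inl (inr x) => sig x | inr x => tau x end.
Let flows := [set v : V | is_flow e S T (flow_of v) (source_of v) (sink_of v)].

Let coord_continuous (k : K) : continuous (fun v : V => v k).
Proof. exact: proj_continuous. Qed.

Let closed_flows : closed flows.
Proof.
have cst (c : R) : continuous (fun _ : V => c) by exact: cst_continuous.
have cflow x y : continuous (fun v => flow_of v x y) by exact: coord_continuous.
have csource x : continuous (fun v => source_of v x) by exact: coord_continuous.
have csink x : continuous (fun v => sink_of v x) by exact: coord_continuous.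
have cinflow x : continuous (fun v => \sum_y flow_of v y x + source_of v x).
  by apply: continuous_add; [exact: continuous_sum | exact: csource].
have coutflow x : continuous (fun v => \sum_y flow_of v x y + sink_of v x).
  by apply: continuous_add; [exact: continuous_sum | exact: csink].
apply: closed_and5.
- apply: closedI; apply: closed_forall => x; apply: closed_forall => y.
    by apply: closed_andb; apply: closed_le_cont.
  by apply: closed_implies; apply: closed_eq_cont.
- apply: closedI; apply: closed_forall => x; first exact: closed_le_cont.
  by apply: closed_implies; apply: closed_eq_cont.
- apply: closedI; apply: closed_forall => x; first exact: closed_le_cont.
  by apply: closed_implies; apply: closed_eq_cont.
- by apply: closed_forall => x; apply: closed_eq_cont.
- by apply: closed_forall => x; apply: closed_le_cont.
Qed.

Let flows_in_box : flows `<=` [set v : V | forall k, `[0, 1] (v k)].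
Proof.
move=> v hv [[[x y]|x]|x]; rewrite /= in_itv /=.
- by case: hv => [[/(_ x y)]].
- by rewrite (source_ge0 hv) (source_le1 hv).
- by rewrite (sink_ge0 hv) (sink_le1 hv).
Qed.

Lemma max_flow_exists : exists m : R, is_max_flow e S T m.
Proof.
have flows0 : flows !=set0.
  exists (fun=> 0); split; do ?split => *;
    by rewrite /flow_of /source_of /sink_of ?big1 ?addr0 ?lexx ?ler01.
have cflows : compact flows.
  apply: subclosed_compact closed_flows _ flows_in_box.
  exact: tychonoff (fun=> @segment_compact R 0 1).
have cvalue : {within flows, continuous (fun v => \sum_x sink_of v x)}.
  by apply: continuous_subspaceT; apply: continuous_sum => x; exact: coord_continuous.
have [c /set_mem fc cmax] := compact_EVT_max flows0 cflows cvalue.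
exists (\sum_x sink_of c x); split; first by exists (flow_of c), (source_of c), (sink_of c).
move=> f sig tau hf; exact: (cmax (vector_of f sig tau) (mem_set hf)).
Qed.

End MaxFlowExists.

Section Subdivision.
Variables (n : nat) (B : rel 'I_n).
Hypotheses (Bsym : symmetric B) (Birr : irreflexive B).

Lemma sum_bedge (V : nmodType) (F : 'I_n -> 'I_n -> V) :
  \sum_(u : bedge B) F (sval u).1 (sval u).2 =
  \sum_i \sum_(j | B i j && (i < j)%N) F i j.
Proof.
rewrite (pair_big_dep xpredT) /=.
rewrite -(big_sub_cond [pred p : 'I_n * 'I_n | B p.1 p.2 && (p.1 < p.2)%N] xpredT
  (fun p => F p.1 p.2)).
by apply: eq_bigl => p; rewrite andbT.
Qed.

Definition bedge_weight (V : nmodType) (phi : 'I_n -> 'I_n -> V) i (u : bedge B) :=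
  (if (sval u).1 == i then phi i (sval u).2 else 0) +
  (if (sval u).2 == i then phi i (sval u).1 else 0).

Lemma sum_bedge_weight (V : nmodType) (phi : 'I_n -> 'I_n -> V) i :
  \sum_u bedge_weight phi i u = \sum_(j | B i j) phi i j.
Proof.
rewrite big_split (sum_bedge (fun a b => if a == i then phi i b else 0)).
rewrite (sum_bedge (fun a b => if b == i then phi i a else 0)) /=.
rewrite [X in _ + X](exchange_big_dep xpredT) //=.
under eq_bigr do rewrite sum_if.
under [X in _ + X]eq_bigr do rewrite sum_if.
rewrite -!big_mkcond !big_pred1_eq [RHS](bigID (fun j : 'I_n => (i < j)%N)) /=.
congr (_ + _); apply: eq_bigl => j; rewrite Bsym.
by case: (ltngtP i j) => // /val_inj->; rewrite Birr.
Qed.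

Lemma bedge_weight_ge0 (R : numDomainType) (phi : 'I_n -> 'I_n -> R) i u :
  (forall a b, 0 <= phi a b) -> 0 <= bedge_weight phi i u.
Proof. by move=> phi_ge0; apply: addr_ge0; case: ifP. Qed.

Lemma sum_bedge_weight_end (V : nmodType) (phi : 'I_n -> 'I_n -> V) u :
  \sum_i bedge_weight phi i u = phi (sval u).1 (sval u).2 + phi (sval u).2 (sval u).1.
Proof. by rewrite big_split /= !sum_if_eq. Qed.

Lemma bedge_neq (u : bedge B) : (sval u).1 != (sval u).2.
Proof.
by case: u => -[i j] /= /andP[_ lt_ij]; apply: contraTneq lt_ij => ->; rewrite ltnn.
Qed.

Lemma endpoints_bedge (u : bedge B) i j :
  endpoint u i -> endpoint u j -> i != j -> B i j.
Proof.
rewrite /endpoint; case: u => -[a b] /= /andP[Bab _].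
by move=> /orP[]/eqP<- /orP[]/eqP<-; rewrite ?eqxx // Bsym.
Qed.

Lemma sum_adj (V : nmodType) (phi : 'I_n -> V) i :
  (forall j, j != i -> ~~ B i j -> phi j = 0) ->
  \sum_j phi j = phi i + \sum_(j | B i j) phi j.
Proof.
move=> phi0; rewrite (bigID (B i)) /= addrC; congr (_ + _).
rewrite big_mkcond (sum_eq_term (i := i)) ?Birr // => j ji.
by case: ifP => //; apply: phi0.
Qed.

Variables (R : realType) (DL DR : rel 'I_n).

Local Notation GV := ('I_n + 'I_n)%type.
Local Notation TV := (tV B + tV B)%type.

Definition vert (x : GV) : TV :=
  match x with inl i => inl (inl i) | inr i => inr (inl i) end.

Definition extend0 (h : GV -> R) (x : TV) : R :=
  match x with inl (inl i) => h (inl i) | inr (inl i) => h (inr i) | _ => 0 end.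

Lemma vert_inj : injective vert.
Proof. by case=> i [] j //= [->]. Qed.

Lemma imset_vert_inl (A : {set 'I_n}) :
  [set (inl (inl a) : TV) | a in A] = vert @: [set inl a | a in A].
Proof. by rewrite -imset_comp. Qed.

Lemma imset_vert_inr (A : {set 'I_n}) :
  [set (inr (inl a) : TV) | a in A] = vert @: [set inr a | a in A].
Proof. by rewrite -imset_comp. Qed.

Lemma sum_extend0 (h : GV -> R) : \sum_x extend0 h x = \sum_y h y.
Proof. by rewrite !big_sumType /= !big1_eq !addr0. Qed.

Lemma extend0_supp (A : {set GV}) (h : GV -> R) :
  (forall y, y \notin A -> h y = 0) -> forall x, x \notin vert @: A -> extend0 h x = 0.
Proof. by move=> hA [[i|u]|[i|u]] //= xA; apply: hA; apply: contra xA; apply: imset_f. Qed.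

Lemma vert_supp (A : {set GV}) (h : TV -> R) :
  (forall x, x \notin vert @: A -> h x = 0) -> forall y, y \notin A -> h (vert y) = 0.
Proof. by move=> hA y yA; apply: hA; rewrite mem_imset //; exact: vert_inj. Qed.

Lemma extend0_restrict (A : {set GV}) (h : TV -> R) :
  (forall x, x \notin vert @: A -> h x = 0) -> forall x, h x = extend0 (h \o vert) x.
Proof.
by move=> hA [[i|u]|[i|u]] //=; apply: hA; apply/imsetP => -[[]].
Qed.

Section Subdivide.
Variables (S T : {set 'I_n}) (f : GV -> GV -> R) (sig tau : GV -> R).
Hypothesis hf :
  is_flow (Gflow B DL DR) [set inl s | s in S] [set inr t | t in T] f sig tau.

Local Notation P := (fun i j => f (inl i) (inr j)).
Local Notation q := (uncross P).

Let P_ge0 i j : 0 <= P i j. Proof. exact: flow_ge0 hf (inl i) (inr j). Qed.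

Let q_off i j : i != j -> ~~ B i j -> q i j = 0.
Proof.
move=> ij Bij; apply: uncross_eq0 => //; apply: (flow_off_edge hf).
by rewrite /= negb_or ij.
Qed.

Definition uncrossed_load (u : bedge B) :=
  q (sval u).1 (sval u).2 + q (sval u).2 (sval u).1.

Definition subdivide_flow (x y : TV) : R :=
  match x, y with
  | inl (inl i), inl (inl j) => f (inl i) (inl j)
  | inl (inl i), inl (inr u) => bedge_weight q i u
  | inl (inl i), inr (inl j) => if i == j then q i i else 0
  | inl (inr u), inr (inr v) => if u == v then uncrossed_load u else 0
  | inr (inr u), inr (inl j) => bedge_weight (fun j i => q i j) j u
  | inr (inl i), inr (inl j) => f (inr i) (inr j)
  | _, _ => 0
  end.

Lemma subdivide_flow_ge0 x y : 0 <= subdivide_flow x y.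
Proof.
have q_ge0 := uncross_ge0 P_ge0.
case: x => [[i|u]|[i|u]]; case: y => [[j|v]|[j|v]] //=.
- exact: (flow_ge0 hf).
- exact: bedge_weight_ge0.
- by case: ifP.
- by case: ifP => // _; rewrite addr_ge0.
- exact: (flow_ge0 hf).
- exact: bedge_weight_ge0.
Qed.

Lemma subdivide_flow_off x y : ~~ tGflow B DL DR x y -> subdivide_flow x y = 0.
Proof.
case: x => [[i|u]|[i|u]]; case: y => [[j|v]|[j|v]] //=.
- by move=> h; apply: (flow_off_edge hf); exact: h.
- by rewrite /endpoint /bedge_weight negb_or => /andP[/negbTE-> /negbTE->]; rewrite addr0.
- by case: (i =P j) => // ->; rewrite eqxx.
- by case: (u =P v) => // ->; rewrite eqxx.
- by move=> h; apply: (flow_off_edge hf); exact: h.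
- by rewrite /endpoint /bedge_weight negb_or => /andP[/negbTE-> /negbTE->]; rewrite addr0.
Qed.

Lemma sum_in_subdivide_vert x :
  \sum_y subdivide_flow y (vert x) = \sum_y f y x.
Proof.
case: x => j; rewrite !big_sumType /= ?big1_eq ?addr0 ?add0r.
- by rewrite [X in _ = _ + X]big1 ?addr0 // => i _; apply: (flow_off_edge hf).
rewrite -big_mkcond big_pred1_eq sum_bedge_weight addrCA addrC; congr (_ + _).
rewrite -(sum_uncross_col P) (sum_adj (i := j)) // => i ij.
by rewrite Bsym; exact: q_off.
Qed.

Lemma sum_out_subdivide_vert x :
  \sum_y subdivide_flow (vert x) y = \sum_y f x y.
Proof.
case: x => i; rewrite !big_sumType /= ?big1_eq ?addr0 ?add0r; last first.
  by rewrite [X in _ = X + _]big1 ?add0r // => j _; apply: (flow_off_edge hf).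
rewrite -addrA sum_if_eq sum_bedge_weight; congr (_ + _).
rewrite addrC -(sum_uncross_row P) (sum_adj (i := i)) // => j ji.
by rewrite eq_sym in ji; exact: q_off.
Qed.

Lemma sum_in_subdivide_bedge_l u :
  \sum_y subdivide_flow y (inl (inr u)) = uncrossed_load u.
Proof. by rewrite !big_sumType /= !big1_eq !addr0 sum_bedge_weight_end. Qed.

Lemma sum_out_subdivide_bedge_l u :
  \sum_y subdivide_flow (inl (inr u)) y = uncrossed_load u.
Proof. by rewrite !big_sumType /= !big1_eq !add0r sum_if_eq. Qed.

Lemma sum_in_subdivide_bedge_r u :
  \sum_y subdivide_flow y (inr (inr u)) = uncrossed_load u.
Proof. by rewrite !big_sumType /= !big1_eq !addr0 add0r -big_mkcond big_pred1_eq. Qed.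

Lemma sum_out_subdivide_bedge_r u :
  \sum_y subdivide_flow (inr (inr u)) y = uncrossed_load u.
Proof. by rewrite !big_sumType /= !big1_eq !add0r addr0 sum_bedge_weight_end addrC. Qed.

Lemma subdivide_flow_is_flow :
  is_flow (tGflow B DL DR) [set (inl (inl s) : TV) | s in S]
    [set (inr (inl t) : TV) | t in T] subdivide_flow (extend0 sig) (extend0 tau).
Proof.
have uncrossed_load_le1 u : uncrossed_load u <= 1.
  apply: le_trans (uncross_pair_le P_ge0 (bedge_neq u)) _.
  by rewrite ge_max !(flow_le1 hf).
rewrite imset_vert_inl imset_vert_inr; apply: is_flow_intro.
- exact: subdivide_flow_ge0.
- exact: subdivide_flow_off.
- by case=> [[i|u]|[i|u]] //=; exact: (source_ge0 hf).
- by apply: extend0_supp; exact: (source_notin hf).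
- by case=> [[i|u]|[i|u]] //=; exact: (sink_ge0 hf).
- by apply: extend0_supp; exact: (sink_notin hf).
- case=> [[i|u]|[i|u]].
  + rewrite (sum_in_subdivide_vert (inl i)) (sum_out_subdivide_vert (inl i)).
    by rewrite (flow_conservation hf).
  + by rewrite sum_in_subdivide_bedge_l sum_out_subdivide_bedge_l.
  + rewrite (sum_in_subdivide_vert (inr i)) (sum_out_subdivide_vert (inr i)).
    by rewrite (flow_conservation hf).
  + by rewrite sum_in_subdivide_bedge_r sum_out_subdivide_bedge_r.
- case=> [[i|u]|[i|u]].
  + by rewrite (sum_in_subdivide_vert (inl i)) (flow_vertex_capacity hf).
  + by rewrite sum_in_subdivide_bedge_l addr0.
  + by rewrite (sum_in_subdivide_vert (inr i)) (flow_vertex_capacity hf).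
  + by rewrite sum_in_subdivide_bedge_r addr0.
Qed.

End Subdivide.

Lemma is_flow_value_subdivide (S T : {set 'I_n}) (v : R) :
  is_flow_value (Gflow B DL DR) [set inl s | s in S] [set inr t | t in T] v ->
  is_flow_value (tGflow B DL DR) [set (inl (inl s) : TV) | s in S]
    [set (inr (inl t) : TV) | t in T] v.
Proof.
case=> f [sig [tau [hf <-]]]; exists (subdivide_flow f), (extend0 sig), (extend0 tau).
by split; [exact: subdivide_flow_is_flow | exact: sum_extend0].
Qed.

Section Contract.
Variables (S T : {set 'I_n}) (g : TV -> TV -> R) (sig tau : TV -> R).
Hypothesis hg : is_flow (tGflow B DL DR) [set (inl (inl s) : TV) | s in S]
  [set (inr (inl t) : TV) | t in T] g sig tau.

Let g_ge0 := flow_ge0 hg.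

Lemma subdiv_flowE x y : g x y =
  match x, y with
  | inl (inl _), inl _ | inl (inl _), inr (inl _) | inr _, inr (inl _) => g x y
  | inl (inr u), inr (inr v) => if u == v then g x y else 0
  | _, _ => 0
  end.
Proof.
case: x => [[i|u]|[i|u]]; case: y => [[j|v]|[j|v]] //=; try by apply: (flow_off_edge hg).
by case: eqP => // /eqP uv; apply: (flow_off_edge hg); exact: uv.
Qed.

Definition bedge_load (u : bedge B) := g (inl (inr u)) (inr (inr u)).

Let sig_off x : x \notin vert @: [set inl s | s in S] -> sig x = 0.
Proof. by rewrite -imset_vert_inl => xS; apply: (source_notin hg); exact: xS. Qed.

Let tau_off x : x \notin vert @: [set inr t | t in T] -> tau x = 0.
Proof. by rewrite -imset_vert_inr => xT; apply: (sink_notin hg); exact: xT. Qed.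

Lemma sum_into_bedge_l u : \sum_i g (inl (inl i)) (inl (inr u)) = bedge_load u.
Proof.
have := flow_conservation hg (inl (inr u)).
rewrite (extend0_restrict sig_off) (extend0_restrict tau_off) /= !addr0.
under eq_bigr do rewrite subdiv_flowE.
under [RHS]eq_bigr do rewrite subdiv_flowE.
by rewrite !big_sumType /= !big1_eq !addr0 !add0r sum_if_eq.
Qed.

Lemma sum_out_bedge_r u : \sum_j g (inr (inr u)) (inr (inl j)) = bedge_load u.
Proof.
have := flow_conservation hg (inr (inr u)).
rewrite (extend0_restrict sig_off) (extend0_restrict tau_off) /= !addr0.
under eq_bigr do rewrite subdiv_flowE.
under [RHS]eq_bigr do rewrite subdiv_flowE.
by rewrite !big_sumType /= !big1_eq !addr0 !add0r -big_mkcond big_pred1_eq => <-.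
Qed.

Definition rerouted i j := \sum_u
  g (inl (inl i)) (inl (inr u)) * g (inr (inr u)) (inr (inl j)) / bedge_load u.

Lemma sum_rerouted_row i : \sum_j rerouted i j = \sum_u g (inl (inl i)) (inl (inr u)).
Proof.
rewrite exchange_big; apply: eq_bigr => u _.
by apply: (sum_coupling_row _ (sum_into_bedge_l u) (sum_out_bedge_r u)) => k; exact: g_ge0.
Qed.

Lemma sum_rerouted_col j : \sum_i rerouted i j = \sum_u g (inr (inr u)) (inr (inl j)).
Proof.
rewrite exchange_big; apply: eq_bigr => u _.
by apply: (sum_coupling_col _ (sum_into_bedge_l u) (sum_out_bedge_r u)) => k; exact: g_ge0.
Qed.

Lemma rerouted_ge0 i j : 0 <= rerouted i j.
Proof.
apply: sumr_ge0 => u _.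
by apply: mulr_ge0; [apply: mulr_ge0|rewrite invr_ge0]; exact: g_ge0.
Qed.

Lemma rerouted_off i j : i != j -> ~~ B i j -> rerouted i j = 0.
Proof.
move=> ij Bij; apply: big1 => u _.
have [ui|/(flow_off_edge hg (inl (inl i)) (inl (inr u)))->] := boolP (endpoint u i).
  have [uj|/(flow_off_edge hg (inr (inr u)) (inr (inl j)))->] := boolP (endpoint u j).
    by move: Bij; rewrite (endpoints_bedge ui uj ij).
  by rewrite mulr0 mul0r.
by rewrite !mul0r.
Qed.

Definition contract_flow (x y : GV) : R :=
  match x, y with
  | inl i, inl j => g (inl (inl i)) (inl (inl j))
  | inl i, inr j => g (inl (inl i)) (inr (inl j)) + rerouted i j
  | inr i, inr j => g (inr (inl i)) (inr (inl j))
  | inr _, inl _ => 0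
  end.

Lemma contract_flow_ge0 x y : 0 <= contract_flow x y.
Proof. by case: x => i; case: y => j //=; rewrite ?addr_ge0 ?rerouted_ge0. Qed.

Lemma contract_flow_off x y : ~~ Gflow B DL DR x y -> contract_flow x y = 0.
Proof.
case: x => i; case: y => j //=.
- by move=> h; apply: (flow_off_edge hg); exact: h.
- by move=> /norP[ij Bij]; rewrite rerouted_off // addr0; apply: (flow_off_edge hg).
- by move=> h; apply: (flow_off_edge hg); exact: h.
Qed.

Lemma sum_in_contract_vert x : \sum_y contract_flow y x = \sum_y g y (vert x).
Proof.
under [RHS]eq_bigr do rewrite subdiv_flowE.
case: x => j; rewrite !big_sumType /= ?big1_eq ?addr0 //.
by rewrite big_split /= sum_rerouted_col addrAC addrA.
Qed.

Lemma sum_out_contract_vert x : \sum_y contract_flow x y = \sum_y g (vert x) y.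
Proof.
under [RHS]eq_bigr do rewrite subdiv_flowE.
case: x => i; rewrite !big_sumType /= ?big1_eq ?addr0 ?add0r //.
by rewrite big_split /= sum_rerouted_row [X in _ + X = _]addrC addrA.
Qed.

Lemma contract_flow_is_flow : is_flow (Gflow B DL DR) [set inl s | s in S]
  [set inr t | t in T] contract_flow (sig \o vert) (tau \o vert).
Proof.
apply: is_flow_intro.
- exact: contract_flow_ge0.
- exact: contract_flow_off.
- by move=> x; exact: source_ge0 hg (vert x).
- exact: vert_supp sig_off.
- by move=> x; exact: sink_ge0 hg (vert x).
- exact: vert_supp tau_off.
- by move=> x; rewrite sum_in_contract_vert sum_out_contract_vert (flow_conservation hg).
- by move=> x; rewrite sum_in_contract_vert (flow_vertex_capacity hg).
Qed.

Lemma contract_flow_value : flow_value (tau \o vert) = flow_value tau.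
Proof.
rewrite /flow_value -sum_extend0; apply: eq_bigr => x _.
exact/esym/extend0_restrict/tau_off.
Qed.

End Contract.

Lemma is_flow_value_contract (S T : {set 'I_n}) (v : R) :
  is_flow_value (tGflow B DL DR) [set (inl (inl s) : TV) | s in S]
    [set (inr (inl t) : TV) | t in T] v ->
  is_flow_value (Gflow B DL DR) [set inl s | s in S] [set inr t | t in T] v.
Proof.
case=> g [sig [tau [hg <-]]]; exists (contract_flow g), (sig \o vert), (tau \o vert).
by split; [exact: contract_flow_is_flow hg | exact: contract_flow_value hg].
Qed.

End Subdivision.

Theorem lemmaA6 (R : realType) (n : nat) (D B DL DR : rel 'I_n)
    (hG : mixed_graph D B)
    (hDL : subrel DL D) (hDR : subrel DR D)
    (S T : {set 'I_n}) (hST : #|S| = #|T|) :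
  exists m : R,
    is_max_flow (Gflow B DL DR)
      [set inl s | s in S] [set inr t | t in T] m /\
    is_max_flow (tGflow B DL DR)
      [set (inl (inl s) : tV B + tV B) | s in S]
      [set (inr (inl t) : tV B + tV B) | t in T] m.
Proof.
case: hG => _ [Birr Bsym].
have [m hm] := max_flow_exists R (Gflow B DL DR) [set inl s | s in S] [set inr t | t in T].
exists m; split=> //; apply: (is_max_flow_transfer _ _ hm) => v.
- exact: is_flow_value_subdivide.
- exact: is_flow_value_contract.
Qed.
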